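(* Let $C\ge 0$, let $D_1,\dots,D_n\subseteq\mathbb{Z}$ each be a nonempty finite set of consecutive integers, let $D^n=D_1\times\cdots\times D_n$, and let $(D^n,f)$ be an Ameso($C$) pair. Let $1\le j\le n$ and let $i_1,\dots,i_j\in\{1,\dots,n\}$ be distinct. Define $\Delta^j_{i_1,\dots,i_j}=D_{i_1}\times\cdots\times D_{i_j}$ and, for $(x_{i_1},\dots,x_{i_j})\in\Delta^j_{i_1,\dots,i_j}$, the conditional function $f^*_{i_1,\dots,i_j}(x_{i_1},\dots,x_{i_j})=\min\{f(\vec y):\vec y=(y_1,\dots,y_n)\in D^n,\ y_{i_k}=x_{i_k}\ \text{for } k=1,\dots,j\}$. Then $(\Delta^j_{i_1,\dots,i_j},f^*_{i_1,\dots,i_j})$ is a $j$-dimensional Ameso($C$) pair.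
   Context: Floors and ceilings of vectors are taken componentwise. A set $D^n\subseteq\mathbb{Z}^n$ is an Ameso set if $\lceil(\vec x+\vec y)/2\rceil,\lfloor(\vec x+\vec y)/2\rfloor\in D^n$ for all $\vec x,\vec y\in D^n$. For $C\ge 0$, $(D^n,f)$ is an Ameso($C$) pair if $D^n$ is an Ameso set, $f:D^n\to\mathbb{R}$ is bounded below, and $f(\vec x)+f(\vec y)+C\ge f(\lceil(\vec x+\vec y)/2\rceil)+f(\lfloor(\vec x+\vec y)/2\rfloor)$ for all $\vec x,\vec y\in D^n$. *)

From mathcomp Require Import all_boot all_order all_algebra.
From mathcomp Require Import boolp classical_sets reals.
Set Implicit Arguments. Unset Strict Implicit. Unset Printing Implicit Defensive.
Import Order.TTheory GRing.Theory Num.Theory.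
Local Open Scope classical_set_scope.
Local Open Scope ring_scope.

(* floor(z/2) and ceil(z/2) for an integer z (intdiv's %/ floors for d>0). *)
Definition half_floor (z : int) : int := divz z 2.
Definition half_ceil (z : int) : int := - divz (- z) 2.

Definition vfloor_mid (n : nat) (x y : 'I_n -> int) : 'I_n -> int :=
  fun k => half_floor (x k + y k).
Definition vceil_mid (n : nat) (x y : 'I_n -> int) : 'I_n -> int :=
  fun k => half_ceil (x k + y k).

Definition is_Ameso_set (n : nat) (D : set ('I_n -> int)) : Prop :=
  forall x y, D x -> D y -> D (vceil_mid x y) /\ D (vfloor_mid x y).

(* (D, f) is an Ameso(C) pair; f is only relevant on D. *)
Definition is_Ameso_pair (R : realType) (C : R) (n : nat)
    (D : set ('I_n -> int)) (f : ('I_n -> int) -> R) : Prop :=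
  [/\ is_Ameso_set D,
      (exists m : R, forall x, D x -> m <= f x) &
      forall x y, D x -> D y ->
        f (vceil_mid x y) + f (vfloor_mid x y) <= f x + f y + C].

Definition box (n : nat) (a b : 'I_n -> int) : set ('I_n -> int) :=
  [set x | forall k, a k <= x k <= b k].

Definition condf (R : realType) (n j : nat) (a b : 'I_n -> int)
    (f : ('I_n -> int) -> R) (i : 'I_j -> 'I_n) (x : 'I_j -> int) : R :=
  inf [set f y | y in [set y | box a b y /\ forall k, y (i k) = x k]].

From mathcomp Require Import all_boot all_order all_algebra.
From mathcomp Require Import boolp classical_sets reals.
From mathcomp Require Import zify lra.
Import Order.TTheory GRing.Theory Num.Theory.
Local Open Scope classical_set_scope.
Local Open Scope ring_scope.

(* Fix x, x' in the small box.  For y, y' in the fibers over x, x', the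
   componentwise midpoints of y, y' lie in the fibers over the midpoints of
   x, x', because the coordinates i_k of y, y' are exactly x, x'.  Hence
   f*(ceil) + f*(floor) <= f(ceil y y') + f(floor y y') <= f y + f y' + C,
   and taking the infimum over y and y' gives the Ameso inequality for f*.
   The fibers are nonempty since i is injective, so these infima are genuine
   and bounded below by any lower bound of f. *)

Lemma half_floor_ceil_between {lo hi u v : int} :
  lo <= u <= hi -> lo <= v <= hi ->
  lo <= half_floor (u + v) <= hi /\ lo <= half_ceil (u + v) <= hi.
Proof. rewrite /half_floor /half_ceil; lia. Qed.

Lemma box_Ameso_set {n : nat} {a b : 'I_n -> int} : is_Ameso_set (box a b).
Proof.
move=> x y x_in y_in; split=> k;
  by have [] := half_floor_ceil_between (x_in k) (y_in k).
Qed.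

Lemma le_inf_add (R : realType) (A B : set R) (z : R) :
  A !=set0 -> B !=set0 -> (forall u v, A u -> B v -> z <= u + v) ->
  z <= inf A + inf B.
Proof.
move=> A_neq0 B_neq0 le_z.
have le_infA v : B v -> z - v <= inf A.
  by move=> Bv; apply: lb_le_inf => // u Au; have := le_z u v Au Bv; lra.
suff : z - inf A <= inf B by lra.
by apply: lb_le_inf => // v Bv; have := le_infA v Bv; lra.
Qed.

Definition fiber {n j : nat} (a b : 'I_n -> int) (i : 'I_j -> 'I_n)
    (x : 'I_j -> int) : set ('I_n -> int) :=
  [set y | box a b y /\ forall k, y (i k) = x k].

Section Fibers.
Context {n j : nat} {a b : 'I_n -> int} {i : 'I_j -> 'I_n}.
Local Notation fiber := (fiber a b i).

Lemma fiber_nonempty (x : 'I_j -> int) :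
  (forall k, a k <= b k) -> injective i -> box (a \o i) (b \o i) x ->
  fiber x !=set0.
Proof.
move=> le_ab i_inj x_in.
pose y k := if [pick k' | i k' == k] is Some k' then x k' else a k.
exists y; split=> k; rewrite /y.
- by case: pickP => [k' /eqP <-|_]; [exact: x_in | rewrite lexx le_ab].
- by case: pickP => [k' /eqP /i_inj -> //|/(_ k)]; rewrite eqxx.
Qed.

Lemma fiber_mid {x x' : 'I_j -> int} {y y' : 'I_n -> int} :
  fiber x y -> fiber x' y' ->
  fiber (vceil_mid x x') (vceil_mid y y') /\
  fiber (vfloor_mid x x') (vfloor_mid y y').
Proof.
move=> [y_in yx] [y'_in y'x'].
have [ceil_in floor_in] := box_Ameso_set _ _ y_in y'_in.
by split; split=> // k; rewrite /vceil_mid /vfloor_mid yx y'x'.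
Qed.

Context {R : realType} {f : ('I_n -> int) -> R} {m : R}.
Hypothesis f_ge_m : forall y, box a b y -> m <= f y.

Lemma condf_le {x : 'I_j -> int} {y : 'I_n -> int} :
  fiber x y -> condf a b f i x <= f y.
Proof.
move=> y_in; apply: ge_inf; last by exists y.
by exists m => _ [y' [y'_in _] <-]; exact: f_ge_m.
Qed.

Lemma condf_ge (x : 'I_j -> int) : fiber x !=set0 -> m <= condf a b f i x.
Proof.
move=> fiber_neq0; apply: lb_le_inf; first exact: image_nonempty.
by move=> _ [y' [y'_in _] <-]; exact: f_ge_m.
Qed.

End Fibers.

Theorem mainTheorem10 (R : realType) (C : R) (n : nat) (a b : 'I_n -> int)
    (f : ('I_n -> int) -> R) (j : nat) (i : 'I_j -> 'I_n) :
  0 <= C ->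
  (forall k, a k <= b k) ->
  is_Ameso_pair C (box a b) f ->
  (0 < j)%N ->
  injective i ->
  is_Ameso_pair C (box (a \o i) (b \o i)) (condf a b f i).
Proof.
move=> _ le_ab [_ [m f_ge_m] f_mid] _ i_inj.
have fiber_neq0 x := fiber_nonempty x le_ab i_inj.
split.
- exact: box_Ameso_set.
- by exists m => x x_in; exact/(condf_ge f_ge_m)/fiber_neq0.
- move=> x x' x_in x'_in.
  suff : condf a b f i (vceil_mid x x') + condf a b f i (vfloor_mid x x') - C
      <= condf a b f i x + condf a b f i x' by lra.
  apply: le_inf_add; [exact/image_nonempty/fiber_neq0 ..|].
  move=> _ _ [y y_in <-] [y' y'_in <-].
  have [ceil_in floor_in] := fiber_mid y_in y'_in.
  have := f_mid _ _ y_in.1 y'_in.1.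
  have := condf_le f_ge_m ceil_in; have := condf_le f_ge_m floor_in; lra.
Qed.
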